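(* For any $\alpha,\beta\in\mathbb{R}$, the problem $\ddot y+3y+\frac32y^3=0$, $y(0)=\alpha$, $\dot y(0)=\beta$ admits a unique solution $\overline y$, which is periodic of period $$T(E)=\frac{8}{\sqrt3}\int_0^1\frac{ds}{\sqrt{(\Lambda_+(E)+\Lambda_-(E)s^2)(1-s^2)}},$$ where $E=\frac{\beta^2}{2}+\frac32\alpha^2+\frac38\alpha^4$ and $\Lambda_\pm(E)=2\sqrt{1+\frac23E}\pm2$. Moreover, the map $E\mapsto T(E)$ is strictly decreasing and $\lim_{E\to0}T(E)=2\pi/\sqrt3$. *)

From Stdlib Require Import Reals.
From Coquelicot Require Import Coquelicot.
Open Scope R_scope.

Definition energy (alpha beta : R) : R :=
  beta ^ 2 / 2 + 3 / 2 * alpha ^ 2 + 3 / 8 * alpha ^ 4.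

Definition Lam_plus (E : R) : R := 2 * sqrt (1 + 2 / 3 * E) + 2.
Definition Lam_minus (E : R) : R := 2 * sqrt (1 + 2 / 3 * E) - 2.

Definition period_integrand (E : R) (s : R) : R :=
  / sqrt ((Lam_plus E + Lam_minus E * s ^ 2) * (1 - s ^ 2)).

Definition Tper (E : R) : R :=
  8 / sqrt 3 * RInt_gen (period_integrand E) (at_point 0) (at_left 1).

Definition is_solution (alpha beta : R) (y : R -> R) : Prop :=
  (forall t, ex_derive y t) /\
  (forall t, is_derive (Derive y) t (- (3 * y t) - 3 / 2 * y t ^ 3)) /\
  y 0 = alpha /\ Derive y 0 = beta.

From Stdlib Require Import Reals Lra Psatz ClassicalEpsilon Ranalysis5.
From Coquelicot Require Import Coquelicot.
Open Scope R_scope.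

(* Writing the solution as [y = A sin theta] with [A^2 = Lam_minus E], conservation of
   energy reduces the equation to the phase equation
   [theta' = sqrt 3 / 2 * sqrt (Lam_plus E + Lam_minus E * sin theta ^ 2)],
   solved by inverting the time map [theta |-> int_0^theta dphi / theta'(phi)].
   By the symmetries of [sin^2], one turn of the phase takes four times the time to
   reach [PI/2], and the substitution [s = sin phi] identifies this with [Tper E]. Uniqueness follows from
   Gronwall's lemma, the nonlinearity being Lipschitz on the energy-bounded region;
   monotonicity and the limit hold because the integrand decreases with [E] and lies
   between [1/2 - E/12] and [1/2]. *)

Lemma is_derive_continuity_pt (f : R -> R) x l : is_derive f x l -> continuity_pt f x.
Proof.
  intros H. apply derivable_continuous_pt. exists l. now apply is_derive_Reals.
Qed.

Lemma is_derive_0_const (f : R -> R) x y : (forall t, is_derive f t 0) -> f x = f y.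
Proof.
  intros Hf. destruct (MVT_gen f x y (fun _ => 0)) as [c [_ Hc]].
  - intros; apply Hf.
  - intros t _. exact (is_derive_continuity_pt f t 0 (Hf t)).
  - lra.
Qed.

Lemma gronwall_zero_fwd (W dW : R -> R) C :
  (forall t, 0 <= W t) -> W 0 = 0 ->
  (forall t, is_derive W t (dW t)) -> (forall t, Rabs (dW t) <= C * W t) ->
  forall t, 0 <= t -> W t = 0.
Proof.
  intros Hpos H0 HD Hb t Ht.
  set (V := fun x => W x * exp (- C * x)).
  assert (HV : forall x, is_derive V x ((dW x - C * W x) * exp (- C * x))).
  { intros x. unfold V.
    replace ((dW x - C * W x) * exp (- C * x))
      with (dW x * exp (- C * x) + W x * (- C * exp (- C * x))) by ring.
    apply (is_derive_mult W (fun x => exp (- C * x)));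
      [apply HD | | intros; apply Rmult_comm].
    auto_derive; auto; ring. }
  destruct (MVT_gen V 0 t _ (fun x _ => HV x)) as [c [_ Hc]].
  { intros x _. eapply is_derive_continuity_pt. apply HV. }
  assert (Hdec : dW c - C * W c <= 0).
  { pose proof (Hb c). pose proof (Rle_abs (dW c)). lra. }
  unfold V in Hc. rewrite H0, Rmult_0_l, Rminus_0_r, Rminus_0_r in Hc.
  pose proof (exp_pos (- C * c)). pose proof (exp_pos (- C * t)). pose proof (Hpos t).
  assert (W t * exp (- C * t) <= 0).
  { rewrite Hc. apply Rmult_le_0_r; [|lra]. apply Rmult_le_0_r; lra. }
  nra.
Qed.

Lemma gronwall_zero (W dW : R -> R) C :
  (forall t, 0 <= W t) -> W 0 = 0 ->
  (forall t, is_derive W t (dW t)) -> (forall t, Rabs (dW t) <= C * W t) ->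
  forall t, W t = 0.
Proof.
  intros Hpos H0 HD Hb t. destruct (Rle_or_lt 0 t) as [Ht | Ht].
  - exact (gronwall_zero_fwd W dW C Hpos H0 HD Hb t Ht).
  - replace t with (- - t) by ring.
    apply (gronwall_zero_fwd (fun s => W (- s)) (fun s => - dW (- s)) C); auto.
    + now rewrite Ropp_0.
    + intros s. replace (- dW (- s)) with (-1 * dW (- s)) by ring.
      apply (is_derive_comp W Ropp). apply HD. auto_derive; auto.
    + intros s. rewrite Rabs_Ropp. apply Hb.
    + lra.
Qed.

Lemma is_RInt_gen_at_left (f : R -> R) a c l : a < c ->
  (forall b, a <= b < c -> ex_RInt f a b) ->
  filterlim (fun b => RInt f a b) (at_left c) (locally l) ->
  is_RInt_gen f (at_point a) (at_left c) l.
Proof.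
  intros Hac Hex Hlim P HP.
  apply Filter_prod with (fun x => x = a) (fun b => a <= b < c /\ P (RInt f a b)).
  - reflexivity.
  - apply filter_and; [| exact (Hlim P HP)].
    exists (mkposreal (c - a) ltac:(lra)). intros y Hy Hyc.
    apply Rabs_def2 in Hy. simpl in Hy. unfold minus, plus, opp in Hy; simpl in Hy. lra.
  - intros x b -> [Hb HPb]. exists (RInt f a b). split; [|exact HPb].
    apply (@RInt_correct R_CompleteNormedModule), Hex, Hb.
Qed.

(* Meaningful only when [f] is onto. *)
Definition inverse (f : R -> R) (t : R) : R := epsilon (inhabits 0) (fun x => f x = t).

Section InverseFunction.

Variables (f g : R -> R) (m : R).
Hypothesis m_pos : 0 < m.
Hypothesis f_deriv : forall x, is_derive f x (g x).
Hypothesis g_ge : forall x, m <= g x.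

Lemma growth_of_deriv_ge x y : x <= y -> m * (y - x) <= f y - f x.
Proof.
  intros Hxy. destruct (MVT_gen f x y g) as [c [_ Hc]].
  - intros; apply f_deriv.
  - intros z _. exact (is_derive_continuity_pt f z _ (f_deriv z)).
  - rewrite Hc. apply Rmult_le_compat_r; [lra | apply g_ge].
Qed.

Lemma strict_incr_of_deriv_ge x y : x < y -> f x < f y.
Proof. intros Hxy. pose proof (growth_of_deriv_ge x y ltac:(lra)). nra. Qed.

Lemma surj_of_deriv_ge t : exists x, f x = t.
Proof.
  set (r := (Rabs t + Rabs (f 0) + 1) / m).
  assert (Hr : m * r = Rabs t + Rabs (f 0) + 1) by (unfold r; field; lra).
  assert (0 < r).
  { apply Rdiv_lt_0_compat; [pose proof (Rabs_pos t); pose proof (Rabs_pos (f 0)) |]; lra. }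
  pose proof (growth_of_deriv_ge 0 r ltac:(lra)).
  pose proof (growth_of_deriv_ge (- r) 0 ltac:(lra)).
  pose proof (Rle_abs t). pose proof (Rle_abs (- t)). pose proof (Rle_abs (f 0)).
  pose proof (Rle_abs (- f 0)). rewrite Rabs_Ropp in *.
  destruct (IVT (fun x => f x - t) (- r) r) as [z [_ Hz]].
  - intros x. apply continuity_pt_minus; [| apply continuity_pt_const; now intros ? ?].
    exact (is_derive_continuity_pt f x _ (f_deriv x)).
  - lra.
  - simpl. lra.
  - simpl. lra.
  - exists z. lra.
Qed.

Lemma f_inverse t : f (inverse f t) = t.
Proof. exact (epsilon_spec (inhabits 0) (fun x => f x = t) (surj_of_deriv_ge t)). Qed.

Lemma inverse_f x : inverse f (f x) = x.
Proof.
  pose proof (f_inverse (f x)) as H. set (y := inverse f (f x)) in *.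
  destruct (Rtotal_order y x) as [h | [h | h]]; auto;
    apply strict_incr_of_deriv_ge in h; lra.
Qed.

Lemma inverse_incr a b : a < b -> inverse f a < inverse f b.
Proof.
  intros Hab. destruct (Rlt_or_le (inverse f a) (inverse f b)) as [h | h]; auto.
  pose proof (f_inverse a). pose proof (f_inverse b).
  destruct h as [h | h].
  - apply strict_incr_of_deriv_ge in h. lra.
  - rewrite h in *. lra.
Qed.

Lemma inverse_lipschitz a b : m * Rabs (inverse f b - inverse f a) <= Rabs (b - a).
Proof.
  assert (Hle : forall a b, a <= b ->
            m * Rabs (inverse f b - inverse f a) <= Rabs (b - a)).
  { intros x y Hxy.
    assert (Hmon : inverse f x <= inverse f y).
    { destruct Hxy as [h | ->]; [left; now apply inverse_incr | lra]. }
    pose proof (growth_of_deriv_ge _ _ Hmon) as H. rewrite !f_inverse in H.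
    rewrite !Rabs_pos_eq by lra. exact H. }
  destruct (Rle_or_lt a b) as [h | h]; [now apply Hle |].
  rewrite <- Rabs_Ropp, Ropp_minus_distr, <- (Rabs_Ropp (b - a)), Ropp_minus_distr.
  apply Hle. lra.
Qed.

Lemma inverse_continuity_pt t : continuity_pt (inverse f) t.
Proof.
  intros eps Heps. exists (eps * m). split; [nra |].
  intros x [_ Hx]. simpl in *. unfold R_dist in *.
  pose proof (inverse_lipschitz t x). apply (Rmult_lt_reg_l m); lra.
Qed.

Lemma is_derive_inverse t : is_derive (inverse f) t (/ g (inverse f t)).
Proof.
  set (Prf := fun a (_ : inverse f (t - 1) <= a <= inverse f (t + 1)) =>
          exist (fun l => derivable_pt_lim f a l) (g a)
            (proj1 (is_derive_Reals _ _ _) (f_deriv a))).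
  assert (Hinc : inverse f (t - 1) <= inverse f t <= inverse f (t + 1)).
  { split; left; apply inverse_incr; lra. }
  apply is_derive_Reals.
  replace (/ g (inverse f t)) with (1 / derive_pt f (inverse f t) (Prf _ Hinc))
    by (simpl; unfold Rdiv; ring).
  apply (derivable_pt_lim_recip_interv f (inverse f) (t - 1) (t + 1) t);
    [apply inverse_continuity_pt | lra | lra | |].
  - intros x _. apply f_inverse.
  - simpl. pose proof (g_ge (inverse f t)). lra.
Qed.

End InverseFunction.

Lemma sqrt3_pos : 0 < sqrt 3.
Proof. apply sqrt_lt_R0; lra. Qed.

Lemma Lam_plus_Lam_minus E : Lam_plus E = Lam_minus E + 4.
Proof. unfold Lam_plus, Lam_minus. ring. Qed.

Lemma Lam_minus_ge0 E : 0 <= E -> 0 <= Lam_minus E.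
Proof.
  intros HE. unfold Lam_minus.
  pose proof (sqrt_le_1_alt 1 (1 + 2/3*E) ltac:(lra)). rewrite sqrt_1 in *. lra.
Qed.

Lemma energy_Lam_minus E : 0 <= E -> 3/2 * Lam_minus E + 3/8 * Lam_minus E ^ 2 = E.
Proof.
  intros HE. pose proof (sqrt_sqrt (1 + 2/3*E) ltac:(lra)).
  unfold Lam_minus. set (r := sqrt (1 + 2/3*E)) in *.
  replace (3/2 * (2 * r - 2) + 3/8 * (2 * r - 2) ^ 2) with (3/2 * (r * r) - 3/2) by field.
  lra.
Qed.

Lemma Lam_minus_lt E1 E2 : 0 <= E1 < E2 -> Lam_minus E1 < Lam_minus E2.
Proof.
  intros HE. unfold Lam_minus.
  pose proof (sqrt_lt_1_alt (1 + 2/3*E1) (1 + 2/3*E2) ltac:(lra)). lra.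
Qed.

Definition Qsin E x := Lam_plus E + Lam_minus E * sin x ^ 2.

Lemma Qsin_bounds E x : 0 <= E -> 4 <= Qsin E x <= 4 + 4/3 * E.
Proof.
  intros HE. unfold Qsin. rewrite Lam_plus_Lam_minus.
  pose proof (Lam_minus_ge0 E HE). pose proof (energy_Lam_minus E HE).
  pose proof (sin2_cos2 x). unfold Rsqr in *.
  assert (0 <= sin x ^ 2 <= 1) by (split; nra). nra.
Qed.

(* The integrand of [Tper] after the substitution [s = sin x]. *)
Definition period_integrand_sin E x := / sqrt (Qsin E x).

Lemma period_integrand_sin_pos E x : 0 <= E -> 0 < period_integrand_sin E x.
Proof.
  intros HE. pose proof (Qsin_bounds E x HE). apply Rinv_0_lt_compat, sqrt_lt_R0. lra.
Qed.

Lemma period_integrand_sin_bounds E x : 0 <= E ->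
  1/2 - E/12 <= period_integrand_sin E x <= 1/2.
Proof.
  intros HE. pose proof (Qsin_bounds E x HE). unfold period_integrand_sin.
  assert (H2 : 2 <= sqrt (Qsin E x)).
  { rewrite <- (sqrt_pow2 2) by lra. apply sqrt_le_1_alt. lra. }
  assert (H3 : sqrt (Qsin E x) <= 2 + E/3).
  { rewrite <- (sqrt_pow2 (2 + E/3)) by lra. apply sqrt_le_1_alt. nra. }
  split.
  - apply Rle_trans with (/ (2 + E/3)); [| apply Rinv_le_contravar; lra].
    apply (Rmult_le_reg_r (2 + E/3)); [lra |]. rewrite Rinv_l by lra. nra.
  - replace (1/2) with (/2) by field. apply Rinv_le_contravar; lra.
Qed.

Lemma period_integrand_sin_decr E1 E2 x : 0 <= E1 < E2 ->
  period_integrand_sin E2 x < period_integrand_sin E1 x.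
Proof.
  intros HE. pose proof (Qsin_bounds E1 x ltac:(lra)).
  assert (Qsin E1 x < Qsin E2 x).
  { unfold Qsin. rewrite !Lam_plus_Lam_minus. pose proof (Lam_minus_lt E1 E2 HE).
    pose proof (pow2_ge_0 (sin x)). nra. }
  apply Rinv_lt_contravar; [apply Rmult_lt_0_compat; apply sqrt_lt_R0; lra |].
  apply sqrt_lt_1_alt. lra.
Qed.

Lemma continuous_period_integrand_sin E x : 0 <= E -> continuous (period_integrand_sin E) x.
Proof.
  intros HE. apply (@ex_derive_continuous R_AbsRing R_NormedModule).
  pose proof (Qsin_bounds E x HE). unfold period_integrand_sin, Qsin in *.
  auto_derive. repeat split; try lra. apply Rgt_not_eq, sqrt_lt_R0. lra.
Qed.

Lemma ex_RInt_period_integrand_sin E a b : 0 <= E -> ex_RInt (period_integrand_sin E) a b.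
Proof.
  intros HE. apply (@ex_RInt_continuous R_CompleteNormedModule).
  intros; now apply continuous_period_integrand_sin.
Qed.

Lemma continuous_period_integrand E s : 0 <= E -> -1 < s < 1 ->
  continuous (period_integrand E) s.
Proof.
  intros HE Hs. apply (@ex_derive_continuous R_AbsRing R_NormedModule).
  pose proof (Lam_minus_ge0 E HE).
  assert (0 < (Lam_minus E + 4 + Lam_minus E * s ^ 2) * (1 - s ^ 2))
    by (apply Rmult_lt_0_compat; nra).
  unfold period_integrand. rewrite Lam_plus_Lam_minus.
  auto_derive. repeat split; try lra. apply Rgt_not_eq, sqrt_lt_R0. lra.
Qed.

Lemma RInt_period_integrand_sin E x : 0 <= E -> 0 <= x < PI/2 ->
  RInt (period_integrand E) 0 (sin x) = RInt (period_integrand_sin E) 0 x.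
Proof.
  intros HE Hx.
  assert (Hcos : forall y, 0 <= y <= x -> 0 < cos y) by (intros; apply cos_gt_0; lra).
  assert (Hsin : forall y, 0 <= y <= x -> -1 < sin y < 1).
  { intros y Hy. pose proof (Hcos y Hy). pose proof (sin2_cos2 y). unfold Rsqr in *. nra. }
  assert (Hc : is_RInt (fun y => scal (cos y) (period_integrand E (sin y))) 0 x
                 (RInt (period_integrand E) (sin 0) (sin x))).
  { apply (@is_RInt_comp R_CompleteNormedModule);
      intros y Hy; rewrite Rmin_left, Rmax_right in Hy by lra.
    - now apply continuous_period_integrand, Hsin.
    - split; [auto_derive; auto; ring |].
      apply (@ex_derive_continuous R_AbsRing R_NormedModule). auto_derive; auto. }
  rewrite sin_0 in Hc. rewrite <- (is_RInt_unique _ _ _ _ Hc).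
  apply RInt_ext. intros y Hy. rewrite Rmin_left, Rmax_right in Hy by lra.
  pose proof (Hcos y ltac:(lra)). pose proof (Qsin_bounds E y HE).
  unfold scal; simpl; unfold mult; simpl.
  unfold period_integrand, period_integrand_sin, Qsin.
  replace (1 - sin y ^ 2) with (cos y)² by (pose proof (sin2_cos2 y); unfold Rsqr in *; lra).
  rewrite sqrt_mult, sqrt_Rsqr by (unfold Qsin in *; try lra; apply Rle_0_sqr).
  assert (0 < sqrt (Qsin E y)) by (apply sqrt_lt_R0; lra).
  unfold Qsin in *. field. lra.
Qed.

Lemma filterlim_asin_at_left_1 : filterlim asin (at_left 1) (locally (PI/2)).
Proof.
  intros P [eps Heps]. pose proof PI_RGT_0.
  set (eta := Rmin eps (PI/2)).
  assert (Heta : 0 < eta <= PI/2 /\ eta <= eps).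
  { unfold eta. repeat split; [apply Rmin_glb_lt; [apply cond_pos | lra] |
      apply Rmin_r | apply Rmin_l]. }
  assert (Hb0 : sin (PI/2 - eta) < 1) by (rewrite <- sin_PI2; apply sin_increasing_1; lra).
  assert (0 <= sin (PI/2 - eta)) by (apply sin_ge_0; lra).
  exists (mkposreal (1 - sin (PI/2 - eta)) ltac:(lra)). intros b Hb Hb1.
  apply Rabs_def2 in Hb. simpl in Hb. unfold minus, plus, opp in Hb; simpl in Hb.
  pose proof (asin_bound_lt b ltac:(lra)).
  assert (PI/2 - eta < asin b).
  { apply sin_increasing_0; try lra. rewrite sin_asin; lra. }
  apply Heps. apply Rabs_def1; simpl; unfold minus, plus, opp; simpl; lra.
Qed.

Definition ellK E := RInt (period_integrand_sin E) 0 (PI/2).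

Lemma is_RInt_gen_period_integrand E : 0 <= E ->
  is_RInt_gen (period_integrand E) (at_point 0) (at_left 1) (ellK E).
Proof.
  intros HE. apply is_RInt_gen_at_left; [lra | |].
  - intros b Hb. apply (@ex_RInt_continuous R_CompleteNormedModule).
    intros s Hs. rewrite Rmin_left, Rmax_right in Hs by lra.
    apply continuous_period_integrand; lra.
  - apply (filterlim_ext_loc (fun b => RInt (period_integrand_sin E) 0 (asin b))).
    + exists (mkposreal 1 Rlt_0_1). intros b Hb Hb1.
      apply Rabs_def2 in Hb. simpl in Hb. unfold minus, plus, opp in Hb; simpl in Hb.
      pose proof (asin_bound_lt b ltac:(lra)).
      assert (0 <= asin b).
      { apply Rnot_lt_le. intros Hneg. apply (sin_increasing_1 _ 0) in Hneg; try lra.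
        rewrite sin_asin, sin_0 in Hneg; lra. }
      rewrite <- RInt_period_integrand_sin, sin_asin by lra. reflexivity.
    + apply (filterlim_comp _ _ _ asin (RInt (period_integrand_sin E) 0)
               _ (locally (PI/2))).
      * exact filterlim_asin_at_left_1.
      * apply (continuous_RInt_1 (period_integrand_sin E) 0 (PI/2)).
        apply filter_forall. intros z.
        apply (@RInt_correct R_CompleteNormedModule), ex_RInt_period_integrand_sin, HE.
Qed.

Lemma Tper_ellK E : 0 <= E -> Tper E = 8 / sqrt 3 * ellK E.
Proof.
  intros HE. unfold Tper. f_equal.
  apply (@is_RInt_gen_unique R_CompleteNormedModule);
    [apply Proper_StrongProper, at_point_filter |
     apply Proper_StrongProper, at_left_proper_filter |].
  now apply is_RInt_gen_period_integrand.
Qed.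

Lemma RInt_const_R a b c : RInt (fun _ => c) a b = (b - a) * c.
Proof. exact (@RInt_const R_CompleteNormedModule a b c). Qed.

Lemma ellK_bounds E : 0 <= E -> PI/4 - PI/2 * (E/12) <= ellK E <= PI/4.
Proof.
  intros HE. pose proof PI_RGT_0. unfold ellK. split.
  - apply Rle_trans with (RInt (fun _ => 1/2 - E/12) 0 (PI/2));
      [right; rewrite RInt_const_R; field |].
    apply RInt_le; [lra | apply ex_RInt_const | now apply ex_RInt_period_integrand_sin |].
    intros; now apply period_integrand_sin_bounds.
  - apply Rle_trans with (RInt (fun _ => 1/2) 0 (PI/2));
      [| right; rewrite RInt_const_R; field].
    apply RInt_le; [lra | now apply ex_RInt_period_integrand_sin | apply ex_RInt_const |].
    intros; now apply period_integrand_sin_bounds.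
Qed.

Lemma ellK_decr E1 E2 : 0 <= E1 < E2 -> ellK E2 < ellK E1.
Proof.
  intros HE. pose proof PI_RGT_0. unfold ellK.
  apply RInt_lt; [lra | intros; apply continuous_period_integrand_sin; lra ..|].
  intros; now apply period_integrand_sin_decr.
Qed.


Lemma ellK_pos E : 0 <= E -> 0 < ellK E.
Proof.
  intros HE. pose proof PI_RGT_0. unfold ellK.
  apply Rle_lt_trans with (RInt (fun _ => 0) 0 (PI/2)); [right; rewrite RInt_const_R; ring |].
  apply RInt_lt; [lra | intros; now apply continuous_period_integrand_sin |
    intros; apply continuous_const |].
  intros; now apply period_integrand_sin_pos.
Qed.

Lemma Tper_pos E : 0 <= E -> 0 < Tper E.
Proof.
  intros HE. rewrite Tper_ellK by exact HE. pose proof sqrt3_pos. pose proof (ellK_pos E HE).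
  apply Rmult_lt_0_compat; [apply Rdiv_lt_0_compat |]; lra.
Qed.

Lemma Tper_decr E1 E2 : 0 <= E1 < E2 -> Tper E2 < Tper E1.
Proof.
  intros HE. rewrite !Tper_ellK by lra. pose proof sqrt3_pos. pose proof (ellK_decr E1 E2 HE).
  apply Rmult_lt_compat_l; [apply Rdiv_lt_0_compat |]; lra.
Qed.

Lemma Tper_at_right_0 : filterlim Tper (at_right 0) (locally (2 * PI / sqrt 3)).
Proof.
  intros P [eps Heps]. pose proof PI_RGT_0. pose proof PI_4. pose proof sqrt3_pos.
  assert (Hs3 : 1 < sqrt 3) by (rewrite <- sqrt_1; apply sqrt_lt_1_alt; lra).
  exists (mkposreal (eps/2) ltac:(pose proof (cond_pos eps); lra)). intros E HE HE0.
  apply Rabs_def2 in HE. simpl in HE. unfold minus, plus, opp in HE; simpl in HE.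
  apply Heps. rewrite Tper_ellK by lra. pose proof (ellK_bounds E ltac:(lra)).
  assert (Hinv : 0 < / sqrt 3 < 1).
  { split; [apply Rinv_0_lt_compat; lra |].
    rewrite <- Rinv_1. apply Rinv_lt_contravar; lra. }
  assert (Hdiff : 8 / sqrt 3 * ellK E + - (2 * PI / sqrt 3)
                 = 8 * (ellK E - PI/4) * / sqrt 3) by (field; lra).
  pose proof (cond_pos eps).
  apply Rabs_def1; simpl; unfold minus, plus, opp; simpl; rewrite Hdiff; nra.
Qed.

Definition speed E x := sqrt 3 / 2 * sqrt (Qsin E x).
Definition phase_time E x := 2 / sqrt 3 * RInt (period_integrand_sin E) 0 x.
Definition phase E := inverse (phase_time E).

Lemma speed_pos E x : 0 <= E -> 0 < speed E x.
Proof.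
  intros HE. pose proof sqrt3_pos. pose proof (Qsin_bounds E x HE).
  assert (0 < sqrt (Qsin E x)) by (apply sqrt_lt_R0; lra).
  unfold speed. nra.
Qed.

Definition speed_max E := sqrt 3 / 2 * sqrt (4 + 4/3 * E).

Lemma speed_le E x : 0 <= E -> speed E x <= speed_max E.
Proof.
  intros HE. pose proof sqrt3_pos. pose proof (Qsin_bounds E x HE).
  unfold speed_max. apply Rmult_le_compat_l; [lra | apply sqrt_le_1_alt; lra].
Qed.

Lemma speed_sq E x : 0 <= E -> speed E x * speed E x = 3/4 * Qsin E x.
Proof.
  intros HE. pose proof (Qsin_bounds E x HE). unfold speed.
  replace (sqrt 3 / 2 * sqrt (Qsin E x) * (sqrt 3 / 2 * sqrt (Qsin E x)))
    with (sqrt 3 * sqrt 3 * (sqrt (Qsin E x) * sqrt (Qsin E x)) / 4) by field.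
  rewrite !sqrt_sqrt by lra. field.
Qed.

Lemma speed_add_PI E x : speed E (x + PI) = speed E x.
Proof. unfold speed, Qsin. rewrite neg_sin. do 4 f_equal. ring. Qed.

Lemma speed_PI_minus E x : speed E (PI - x) = speed E x.
Proof. unfold speed, Qsin. now rewrite sin_PI_x. Qed.

Lemma is_derive_speed E x : 0 <= E ->
  is_derive (speed E) x (3/4 * Lam_minus E * sin x * cos x / speed E x).
Proof.
  intros HE. pose proof (Qsin_bounds E x HE). pose proof (speed_pos E x HE).
  pose proof (speed_sq E x HE). pose proof sqrt3_pos.
  unfold speed, Qsin in *.
  assert (0 < sqrt (Lam_plus E + Lam_minus E * sin x ^ 2)) by (apply sqrt_lt_R0; lra).
  auto_derive; [replace (sin x * (sin x * 1)) with (sin x ^ 2) by ring; lra |].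
  replace (sin x * (sin x * 1)) with (sin x ^ 2) by ring.
  field_simplify; [| lra ..].
  replace 6 with (2 * (sqrt 3 * sqrt 3)) by (rewrite sqrt_sqrt; lra).
  field. lra.
Qed.

Lemma is_derive_phase_time E x : 0 <= E -> is_derive (phase_time E) x (/ speed E x).
Proof.
  intros HE. pose proof sqrt3_pos. pose proof (Qsin_bounds E x HE).
  replace (/ speed E x) with (2 / sqrt 3 * period_integrand_sin E x).
  2:{ unfold speed, period_integrand_sin. field.
      split; [apply Rgt_not_eq, sqrt_lt_R0 |]; lra. }
  apply is_derive_scal.
  apply (is_derive_RInt (period_integrand_sin E) _ 0).
  - apply filter_forall. intros y.
    apply (@RInt_correct R_CompleteNormedModule), ex_RInt_period_integrand_sin, HE.
  - now apply continuous_period_integrand_sin.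
Qed.

Lemma phase_time_0 E : phase_time E 0 = 0.
Proof. unfold phase_time. rewrite (@RInt_point R_CompleteNormedModule). apply Rmult_0_r. Qed.

Lemma Tper_phase_time E : 0 <= E -> Tper E = 4 * phase_time E (PI/2).
Proof.
  intros HE. pose proof sqrt3_pos. rewrite Tper_ellK by exact HE.
  unfold phase_time, ellK. field. lra.
Qed.

Lemma phase_time_inverse_hyps E : 0 <= E ->
  0 < / speed_max E /\ (forall x, is_derive (phase_time E) x (/ speed E x)) /\
  (forall x, / speed_max E <= / speed E x).
Proof.
  intros HE. pose proof sqrt3_pos. unfold speed_max.
  assert (0 < sqrt (4 + 4/3 * E)) by (apply sqrt_lt_R0; lra).
  split; [| split].
  - apply Rinv_0_lt_compat. nra.
  - intros; now apply is_derive_phase_time.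
  - intros x. apply Rinv_le_contravar; [now apply speed_pos | now apply speed_le].
Qed.

Lemma phase_time_phase E t : 0 <= E -> phase_time E (phase E t) = t.
Proof.
  intros HE. destruct (phase_time_inverse_hyps E HE) as [Hm [Hd Hg]].
  exact (f_inverse _ _ _ Hm Hd Hg t).
Qed.

Lemma phase_phase_time E x : 0 <= E -> phase E (phase_time E x) = x.
Proof.
  intros HE. destruct (phase_time_inverse_hyps E HE) as [Hm [Hd Hg]].
  exact (inverse_f _ _ _ Hm Hd Hg x).
Qed.

Lemma phase_incr E a b : 0 <= E -> a < b -> phase E a < phase E b.
Proof.
  intros HE. destruct (phase_time_inverse_hyps E HE) as [Hm [Hd Hg]].
  exact (inverse_incr _ _ _ Hm Hd Hg a b).
Qed.

Lemma is_derive_phase E t : 0 <= E -> is_derive (phase E) t (speed E (phase E t)).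
Proof.
  intros HE. destruct (phase_time_inverse_hyps E HE) as [Hm [Hd Hg]].
  rewrite <- (Rinv_inv (speed E (phase E t))).
  exact (is_derive_inverse _ _ _ Hm Hd Hg t).
Qed.

Lemma phase_time_add_PI E x : 0 <= E ->
  phase_time E (x + PI) = phase_time E x + phase_time E PI.
Proof.
  intros HE.
  assert (H : phase_time E (x + PI) - phase_time E x
              = phase_time E (0 + PI) - phase_time E 0).
  { apply (is_derive_0_const (fun y => phase_time E (y + PI) - phase_time E y)).
    intros y. replace 0 with (1 * / speed E (y + PI) - / speed E y)
      by (rewrite speed_add_PI; ring).
    apply (is_derive_minus (fun y => phase_time E (y + PI)) (phase_time E));
      [apply (is_derive_comp (phase_time E) (fun y => y + PI)) |];
      try (now apply is_derive_phase_time); auto_derive; auto. }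
  rewrite Rplus_0_l, phase_time_0 in H. lra.
Qed.

Lemma phase_time_PI_minus E x : 0 <= E ->
  phase_time E (PI - x) + phase_time E x = phase_time E PI.
Proof.
  intros HE.
  assert (H : phase_time E (PI - x) + phase_time E x
              = phase_time E (PI - 0) + phase_time E 0).
  { apply (is_derive_0_const (fun y => phase_time E (PI - y) + phase_time E y)).
    intros y. replace 0 with (-1 * / speed E (PI - y) + / speed E y)
      by (rewrite speed_PI_minus; ring).
    apply (is_derive_plus (fun y => phase_time E (PI - y)) (phase_time E));
      [apply (is_derive_comp (phase_time E) (fun y => PI - y)) |];
      try (now apply is_derive_phase_time); auto_derive; auto. }
  rewrite Rminus_0_r, phase_time_0, Rplus_0_r in H. exact H.
Qed.

Lemma phase_time_add_2PI E x : 0 <= E ->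
  phase_time E (x + 2 * PI) = phase_time E x + Tper E.
Proof.
  intros HE. rewrite Tper_phase_time by exact HE.
  pose proof (phase_time_PI_minus E (PI/2) HE) as Hhalf.
  replace (PI - PI/2) with (PI/2) in Hhalf by field.
  replace (x + 2 * PI) with (x + PI + PI) by ring.
  rewrite !phase_time_add_PI by exact HE. lra.
Qed.

Lemma phase_add_Tper E t : 0 <= E -> phase E (t + Tper E) = phase E t + 2 * PI.
Proof.
  intros HE. rewrite <- (phase_time_phase E t HE) at 1.
  rewrite <- phase_time_add_2PI by exact HE. now apply phase_phase_time.
Qed.

Definition orbit E c t := sqrt (Lam_minus E) * sin (phase E (t + c)).
Definition orbit_velocity E c t :=
  sqrt (Lam_minus E) * (cos (phase E (t + c)) * speed E (phase E (t + c))).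

Lemma is_derive_phase_shift E c t : 0 <= E ->
  is_derive (fun t => phase E (t + c)) t (speed E (phase E (t + c))).
Proof.
  intros HE. rewrite <- (Rmult_1_l (speed E _)).
  apply (is_derive_comp (phase E) (fun t => t + c));
    [now apply is_derive_phase | auto_derive; auto].
Qed.

Lemma is_derive_orbit E c t : 0 <= E -> is_derive (orbit E c) t (orbit_velocity E c t).
Proof.
  intros HE. unfold orbit, orbit_velocity. apply is_derive_scal.
  rewrite Rmult_comm.
  apply (is_derive_comp sin (fun t => phase E (t + c)));
    [apply is_derive_sin | now apply is_derive_phase_shift].
Qed.

(* With [A^2 = Lam_minus E], [speed^2 = 3/4 (A^2 + 4 + A^2 sin^2)] turns the second
   derivative into [-3 y - 3/2 y^3]. *)
Lemma is_derive_orbit_velocity E c t : 0 <= E ->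
  is_derive (orbit_velocity E c) t (- (3 * orbit E c t) - 3/2 * orbit E c t ^ 3).
Proof.
  intros HE. unfold orbit_velocity, orbit.
  set (A := sqrt (Lam_minus E)). set (x := phase E (t + c)).
  assert (HA : A * A = Lam_minus E) by (apply sqrt_sqrt, Lam_minus_ge0, HE).
  pose proof (speed_pos E x HE) as Hv. pose proof (speed_sq E x HE) as Hv2.
  pose proof (is_derive_phase_shift E c t HE) as Hx. fold x in Hx.
  replace (- (3 * (A * sin x)) - 3/2 * (A * sin x) ^ 3) with
    (A * ((speed E x * - sin x) * speed E x
          + cos x * (speed E x * (3/4 * Lam_minus E * sin x * cos x / speed E x)))).
  - apply is_derive_scal.
    apply (is_derive_mult (fun t => cos (phase E (t + c))) (fun t => speed E (phase E (t + c))));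
      [| | intros; apply Rmult_comm].
    + apply (is_derive_comp cos (fun t => phase E (t + c)) t); [apply is_derive_cos | exact Hx].
    + apply (is_derive_comp (speed E) (fun t => phase E (t + c)) t);
        [now apply is_derive_speed | exact Hx].
  - unfold Qsin in Hv2. rewrite Lam_plus_Lam_minus, <- HA in Hv2. rewrite <- HA.
    pose proof (sin2_cos2 x) as Hsc. unfold Rsqr in Hsc.
    replace (cos x * (speed E x * (3/4 * (A * A) * sin x * cos x / speed E x)))
      with (3/4 * (A * A) * sin x * (cos x * cos x)) by (field; lra).
    replace (speed E x * - sin x * speed E x) with (- sin x * (speed E x * speed E x)) by ring.
    rewrite Hv2. replace (cos x * cos x) with (1 - sin x * sin x) by lra. field.
Qed.

Lemma orbit_is_solution E c : 0 <= E ->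
  is_solution (orbit E c 0) (orbit_velocity E c 0) (orbit E c).
Proof.
  intros HE.
  assert (HD : forall t, Derive (orbit E c) t = orbit_velocity E c t)
    by (intros; now apply is_derive_unique, is_derive_orbit).
  split; [| split; [| split]].
  - intros t. eexists. now apply is_derive_orbit.
  - intros t. apply (is_derive_ext (orbit_velocity E c)); [intros; now rewrite HD |].
    now apply is_derive_orbit_velocity.
  - reflexivity.
  - apply HD.
Qed.

Lemma energy_nonneg a b : 0 <= energy a b.
Proof. unfold energy. pose proof (pow2_ge_0 a). pose proof (pow2_ge_0 b). nra. Qed.

Lemma sq_le_Lam_minus_energy a b : a ^ 2 <= Lam_minus (energy a b).
Proof.
  pose proof (energy_nonneg a b) as HE. pose proof (energy_Lam_minus _ HE) as HL.
  pose proof (Lam_minus_ge0 _ HE). pose proof (pow2_ge_0 a). pose proof (pow2_ge_0 b).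
  unfold energy in HL at 3. set (L := Lam_minus (energy a b)) in *. nra.
Qed.

Lemma orbit_energy_identity E x : 0 <= E ->
  (sqrt (Lam_minus E) * (cos x * speed E x)) ^ 2 / 2
  + 3/2 * (sqrt (Lam_minus E) * sin x) ^ 2 + 3/8 * (sqrt (Lam_minus E) * sin x) ^ 4 = E.
Proof.
  intros HE. pose proof (speed_sq E x HE) as Hv2. pose proof (energy_Lam_minus E HE) as HL.
  assert (HA : sqrt (Lam_minus E) * sqrt (Lam_minus E) = Lam_minus E)
    by (apply sqrt_sqrt, Lam_minus_ge0, HE).
  pose proof (sin2_cos2 x) as Hsc. unfold Rsqr in Hsc.
  unfold Qsin in Hv2. rewrite Lam_plus_Lam_minus in Hv2.
  set (A := sqrt (Lam_minus E)) in *. set (v := speed E x) in *.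
  set (L := Lam_minus E) in *. rewrite <- HL.
  replace ((A * (cos x * v)) ^ 2 / 2) with ((A * A) * (cos x * cos x) * (v * v) / 2) by field.
  rewrite HA, Hv2. replace (cos x * cos x) with (1 - sin x * sin x) by lra.
  replace ((A * sin x) ^ 2) with ((A * A) * (sin x * sin x)) by ring.
  replace ((A * sin x) ^ 4) with ((A * A) * (A * A) * (sin x * sin x) * (sin x * sin x)) by ring.
  rewrite HA. field.
Qed.

Lemma exists_sin_cos_nonneg A a : 0 <= A -> a ^ 2 <= A * A ->
  exists x, A * sin x = a /\ 0 <= cos x.
Proof.
  intros HA0 Ha2. destruct (Req_dec A 0) as [-> | HA].
  - exists 0. rewrite sin_0, cos_0. split; [nra | lra].
  - set (s0 := a / A).
    assert (Hs0 : A * s0 = a) by (unfold s0; field; exact HA).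
    assert (Hs01 : -1 <= s0 <= 1).
    { assert (s0 * s0 <= 1).
      { apply (Rmult_le_reg_l (A * A)); [nra |].
        replace (A * A * (s0 * s0)) with ((A * s0) ^ 2) by ring. rewrite Hs0. lra. }
      split; nra. }
    exists (asin s0). rewrite sin_asin, cos_asin by exact Hs01.
    split; [exact Hs0 | apply sqrt_pos].
Qed.

(* The energy identity fixes the velocity up to sign, and [x |-> PI - x] flips it. *)
Lemma initial_phase a b : exists x,
  sqrt (Lam_minus (energy a b)) * sin x = a /\
  sqrt (Lam_minus (energy a b)) * (cos x * speed (energy a b) x) = b.
Proof.
  set (E := energy a b). pose proof (energy_nonneg a b) as HE. fold E in HE.
  set (A := sqrt (Lam_minus E)).
  assert (Ha2 : a ^ 2 <= A * A).
  { unfold A. rewrite sqrt_sqrt by now apply Lam_minus_ge0. apply sq_le_Lam_minus_energy. }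
  destruct (exists_sin_cos_nonneg A a (sqrt_pos _) Ha2) as [x0 [Hsin Hcos]].
  pose proof (orbit_energy_identity E x0 HE) as Hid. fold A in Hid. rewrite Hsin in Hid.
  set (X := A * (cos x0 * speed E x0)) in *.
  assert (HEab : E = b ^ 2 / 2 + 3/2 * a ^ 2 + 3/8 * a ^ 4) by reflexivity.
  rewrite HEab in Hid.
  assert (HX0 : 0 <= X).
  { pose proof (speed_pos E x0 HE). pose proof (sqrt_pos (Lam_minus E)). unfold X.
    apply Rmult_le_pos; [assumption | apply Rmult_le_pos; lra]. }
  assert (HX2 : X * X = b * b) by nra.
  destruct (Rle_or_lt 0 b) as [Hb | Hb].
  - exists x0. split; [exact Hsin |]. fold X. nra.
  - exists (PI - x0). rewrite sin_PI_x, Rtrigo_facts.cos_pi_minus, speed_PI_minus.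
    split; [exact Hsin |].
    replace (A * (- cos x0 * speed E x0)) with (- X) by (unfold X; ring). nra.
Qed.

Lemma orbit_through a b : exists c,
  orbit (energy a b) c 0 = a /\ orbit_velocity (energy a b) c 0 = b.
Proof.
  pose proof (energy_nonneg a b) as HE.
  destruct (initial_phase a b) as [x [Hx Hv]].
  exists (phase_time (energy a b) x). unfold orbit, orbit_velocity.
  rewrite Rplus_0_l, phase_phase_time by exact HE. now split.
Qed.

Lemma orbit_add_Tper E c t : 0 <= E -> orbit E c (t + Tper E) = orbit E c t.
Proof.
  intros HE. unfold orbit. replace (t + Tper E + c) with (t + c + Tper E) by ring.
  rewrite phase_add_Tper, sin_plus, sin_2PI, cos_2PI by exact HE. f_equal. ring.
Qed.

Lemma sin_lt_1 x : PI/2 < x < PI/2 + 2 * PI -> sin x < 1.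
Proof.
  intros Hx. replace x with (2 * ((x - PI/2) / 2) + PI/2) by field.
  rewrite sin_plus, sin_PI2, cos_PI2, cos_2a_sin.
  assert (0 < sin ((x - PI/2) / 2)) by (apply sin_gt_0; lra). nra.
Qed.

Lemma Lam_minus_pos E : 0 < E -> 0 < Lam_minus E.
Proof.
  intros HE. replace 0 with (Lam_minus 0) at 1.
  - apply Lam_minus_lt. lra.
  - unfold Lam_minus. rewrite Rmult_0_r, Rplus_0_r, sqrt_1. ring.
Qed.

(* The orbit reaches its maximum [sqrt (Lam_minus E)] exactly when the phase is
   [PI/2] modulo [2 PI]. *)
Lemma orbit_not_periodic E c tau : 0 < E -> 0 < tau < Tper E ->
  exists t, orbit E c (t + tau) <> orbit E c t.
Proof.
  intros HE Htau.
  assert (Hpi : phase E (phase_time E (PI/2)) = PI/2) by (apply phase_phase_time; lra).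
  exists (phase_time E (PI/2) - c). unfold orbit.
  replace (phase_time E (PI/2) - c + tau + c) with (phase_time E (PI/2) + tau) by ring.
  replace (phase_time E (PI/2) - c + c) with (phase_time E (PI/2)) by ring.
  rewrite Hpi, sin_PI2.
  assert (HA : 0 < sqrt (Lam_minus E)) by (apply sqrt_lt_R0, Lam_minus_pos, HE).
  assert (Hlow : PI/2 < phase E (phase_time E (PI/2) + tau))
    by (rewrite <- Hpi at 1; apply phase_incr; lra).
  assert (Hhigh : phase E (phase_time E (PI/2) + tau) < PI/2 + 2 * PI).
  { rewrite <- Hpi at 2. rewrite <- phase_add_Tper by lra. apply phase_incr; lra. }
  pose proof (sin_lt_1 _ (conj Hlow Hhigh)). intros Heq. nra.
Qed.

Lemma solution_energy a b y : is_solution a b y ->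
  forall t, Derive y t ^ 2 / 2 + 3/2 * y t ^ 2 + 3/8 * y t ^ 4 = energy a b.
Proof.
  intros [Hd [Hdd [H0 H1]]] t.
  assert (Hy : forall s, is_derive y s (Derive y s)) by (intros; now apply Derive_correct).
  rewrite (is_derive_0_const
    (fun s => Derive y s ^ 2 / 2 + 3/2 * y s ^ 2 + 3/8 * y s ^ 4) t 0).
  - unfold energy. now rewrite H0, H1.
  - intros s.
    replace 0 with ((- (3 * y s) - 3/2 * y s ^ 3) * (2 * Derive y s ^ 1 / 2)
                    + Derive y s * (3/2 * (2 * y s ^ 1))
                    + Derive y s * (3/8 * (4 * y s ^ 3))) by field.
    apply (is_derive_plus (fun s => Derive y s ^ 2 / 2 + 3/2 * y s ^ 2));
      [apply (is_derive_plus (fun s => Derive y s ^ 2 / 2)) |].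
    + apply (is_derive_comp (fun v => v ^ 2 / 2) (Derive y)); [auto_derive; auto; field | apply Hdd].
    + apply (is_derive_comp (fun v => 3/2 * v ^ 2) y); [auto_derive; auto; field | apply Hy].
    + apply (is_derive_comp (fun v => 3/8 * v ^ 4) y); [auto_derive; auto; field | apply Hy].
Qed.

Lemma solution_sq_le a b y : is_solution a b y -> forall t, y t ^ 2 <= 2/3 * energy a b.
Proof.
  intros Hy t. pose proof (solution_energy a b y Hy t).
  pose proof (pow2_ge_0 (Derive y t)). pose proof (pow2_ge_0 (y t ^ 2)).
  replace (y t ^ 4) with ((y t ^ 2) ^ 2) in * by ring. lra.
Qed.

(* Energy bounds both solutions, on which the nonlinearity is Lipschitz; Gronwall
   is applied to the squared distance in phase space. *)
Lemma solution_unique a b y z : is_solution a b y -> is_solution a b z ->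
  forall t, y t = z t.
Proof.
  intros Sy Sz.
  pose proof (solution_sq_le a b y Sy) as By. pose proof (solution_sq_le a b z Sz) as Bz.
  set (B := 2/3 * energy a b) in *.
  destruct Sy as [Hdy [Hddy [Hy0 Hy1]]]. destruct Sz as [Hdz [Hddz [Hz0 Hz1]]].
  set (w := fun t => y t - z t). set (u := fun t => Derive y t - Derive z t).
  set (L := fun t => 3 + 3/2 * (y t ^ 2 + y t * z t + z t ^ 2)).
  assert (HL : forall t, 3 <= L t <= 3 + 9/2 * B).
  { intros t. pose proof (By t). pose proof (Bz t). unfold L. split; nra. }
  assert (Hw : forall t, is_derive w t (u t))
    by (intros t; apply (is_derive_minus y z); now apply Derive_correct).
  assert (Hu : forall t, is_derive u t (- w t * L t)).
  { intros t. replace (- w t * L t)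
      with ((- (3 * y t) - 3/2 * y t ^ 3) - (- (3 * z t) - 3/2 * z t ^ 3))
      by (unfold w, L; field).
    now apply (is_derive_minus (Derive y) (Derive z)). }
  assert (HW : forall t, w t * w t + u t * u t = 0).
  { apply (gronwall_zero _
      (fun t => u t * w t + w t * u t + (- w t * L t * u t + u t * (- w t * L t)))
      (2 + 9/2 * B)).
    - intros t. nra.
    - unfold w, u. rewrite Hy0, Hz0, Hy1, Hz1. ring.
    - intros t. apply (is_derive_plus (fun t => w t * w t) (fun t => u t * u t));
        [apply (is_derive_mult w w) | apply (is_derive_mult u u)];
        auto; intros; apply Rmult_comm.
    - intros t. pose proof (HL t).
      replace (u t * w t + w t * u t + (- w t * L t * u t + u t * (- w t * L t)))
        with (- (2 * w t * u t) * (L t - 1)) by ring.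
      rewrite Rabs_mult, (Rabs_pos_eq (L t - 1)) by lra.
      assert (Rabs (- (2 * w t * u t)) <= w t * w t + u t * u t).
      { apply Rabs_le. pose proof (pow2_ge_0 (w t + u t)).
        pose proof (pow2_ge_0 (w t - u t)). split; nra. }
      apply Rle_trans with ((w t * w t + u t * u t) * (L t - 1));
        [apply Rmult_le_compat_r; lra | nra]. }
  intros t. specialize (HW t). assert (w t = 0) by nra. unfold w in *. lra.
Qed.

Lemma energy_pos a b : (a, b) <> (0, 0) -> 0 < energy a b.
Proof.
  intros Hab. unfold energy.
  destruct (Req_dec a 0) as [-> | Ha].
  - assert (b <> 0) by (intros ->; now apply Hab).
    pose proof (pow2_gt_0 b) as Hb. specialize (Hb H). lra.
  - pose proof (pow2_ge_0 b). pose proof (pow2_gt_0 a Ha). pose proof (pow2_ge_0 (a ^ 2)).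
    replace (a ^ 4) with ((a ^ 2) ^ 2) by ring. lra.
Qed.

Theorem lemma8p1 :
  (forall alpha beta : R,
     exists y : R -> R,
       is_solution alpha beta y /\
       (forall z : R -> R, is_solution alpha beta z -> forall t, z t = y t) /\
       0 < Tper (energy alpha beta) /\
       (forall t, y (t + Tper (energy alpha beta)) = y t) /\
       ((alpha, beta) <> (0, 0) ->
          forall tau, 0 < tau < Tper (energy alpha beta) ->
            exists t, y (t + tau) <> y t)) /\
  (forall E, 0 <= E -> ex_RInt_gen (period_integrand E) (at_point 0) (at_left 1)) /\
  (forall E1 E2, 0 <= E1 < E2 -> Tper E2 < Tper E1) /\
  filterlim Tper (at_right 0) (locally (2 * PI / sqrt 3)).
Proof.
  split; [| split; [| split]].
  - intros a b. set (E := energy a b). pose proof (energy_nonneg a b) as HE.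
    destruct (orbit_through a b) as [c [Ha Hb]]. fold E in Ha, Hb.
    pose proof (orbit_is_solution E c HE) as Hsol. rewrite Ha, Hb in Hsol.
    exists (orbit E c). split; [| split; [| split; [| split]]].
    + exact Hsol.
    + intros z Hz t. exact (solution_unique a b z (orbit E c) Hz Hsol t).
    + now apply Tper_pos.
    + intros t. now apply orbit_add_Tper.
    + intros Hab tau. apply orbit_not_periodic. now apply energy_pos.
  - intros E HE. exists (ellK E). now apply is_RInt_gen_period_integrand.
  - exact Tper_decr.
  - exact Tper_at_right_0.
Qed.
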